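(* Let $b_1,r_1,b_2,r_2$ be positive integers with $b_1r_2-b_2r_1=1$, and suppose $n=xr_1+yr_2$ for some integers $x,y$ with $r_2\ge x>0$ and $r_1\ge y>0$. Then $$\Delta^n(b_1+b_2,r_1+r_2)=\Delta^n(b_1,r_1)+\Delta^n(b_2,r_2)-\min\{x,y\}.$$
   Context: For positive integers $b,r$ and an integer $j\ge 1$, let $\overline{jb}$ denote the residue of $jb$ modulo $r$ in $\{0,\dots,r-1\}$, and define $$\overline{M}^j(b,r)=\frac{\overline{jb}\,(r-\overline{jb})}{2r},\qquad M^j(b,r)=\frac{jb\,(r-jb)}{2r},\qquad \Delta^j(b,r)=\overline{M}^j(b,r)-M^j(b,r).$$ *)

From mathcomp Require Import all_boot all_order all_algebra.
Set Implicit Arguments. Unset Strict Implicit. Unset Printing Implicit Defensive.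
Import Order.TTheory GRing.Theory Num.Theory.
Local Open Scope ring_scope.

Definition resid (j b r : nat) : nat := (j * b) %% r.

Definition Mbar (j b r : nat) : rat :=
  ((resid j b r)%:R * ((r%:R : rat) - (resid j b r)%:R)) / (2 * r%:R).

Definition Mj (j b r : nat) : rat :=
  ((j * b)%:R * ((r%:R : rat) - (j * b)%:R)) / (2 * r%:R).

Definition Delta (j b r : nat) : rat := Mbar j b r - Mj j b r.

(* Since b1 r2 - b2 r1 = 1, the residues of n b1 mod r1 and n b2 mod r2 are y and -x, and the
   mediant pair (b1 + b2, r1 + r2) satisfies the same determinant relation with each of
   (b1, r1) and (b2, r2), so n (b1 + b2) is congruent to y - x mod r1 + r2. The product
   e (r - e) only depends on the residue of e up to sign, which gives all three values of
   Mbar in closed form; what remains is a rational-function identity. *)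

From mathcomp Require Import all_boot all_order all_algebra.
From mathcomp Require Import zify ring.
Set Implicit Arguments. Unset Strict Implicit.
Import Order.TTheory GRing.Theory Num.Theory.
Local Open Scope ring_scope.

Definition quadr {F : fieldType} (e r : F) : F := e * (r - e) / (2 * r).

Lemma quadrN (F : numFieldType) (e r : F) : r != 0 -> quadr (- e) r = quadr e r - e.
Proof. by move=> r0; rewrite /quadr; field; rewrite r0. Qed.

Lemma Mj_quadr (j b r : nat) : Mj j b r = quadr (j%:R * b%:R) r%:R.
Proof. by rewrite /Mj /quadr natrM. Qed.

Lemma quadr_mediant (F : numFieldType) (b1 r1 b2 r2 x y : F) :
  r1 != 0 -> r2 != 0 -> r1 + r2 != 0 -> b1 * r2 - b2 * r1 = 1 ->
  let n := x * r1 + y * r2 in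
  quadr (y - x) (r1 + r2) + x - quadr (n * (b1 + b2)) (r1 + r2) =
    quadr y r1 - quadr (n * b1) r1 + quadr x r2 - quadr (n * b2) r2.
Proof.
move=> r1_0 r2_0 r12_0 det n.
have -> : b1 = (1 + b2 * r1) / r2 by rewrite -det subrK mulfK.
by rewrite /n /quadr; field; rewrite r1_0 r2_0 r12_0.
Qed.

Lemma mod_prod_congr (N e R : nat) : (e <= R)%N -> N = e %[mod R] ->
  (N %% R * (R - N %% R) = e * (R - e))%N.
Proof.
move=> leeR ->; case: (ltngtP e R) leeR => // [ltR _ | -> _].
- by rewrite modn_small.
- by rewrite modnn subnn muln0.
Qed.

Lemma mod_prod_congrN (N e R : nat) : (e <= R)%N -> (N + e = 0 %[mod R])%N ->
  (N %% R * (R - N %% R) = e * (R - e))%N.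
Proof.
move=> leeR; rewrite -modnDml mod0n => /eqP; rewrite -/(dvdn _ _) => /dvdnP [k hk].
have [-> | R_gt0] := posnP R; first by rewrite !sub0n !muln0.
have ltz := ltn_pmod N R_gt0.
by case: k hk => [|[|k]] hk; nia.
Qed.

Lemma Mbar_mod_prod (j b r : nat) : (0 < r)%N ->
  Mbar j b r = (resid j b r * (r - resid j b r))%N%:R / (2 * r%:R).
Proof. by move=> r_gt0; rewrite /Mbar natrM natrB // ltnW // ltn_mod. Qed.

Lemma quadr_nat (F : fieldType) (e r : nat) : (e <= r)%N ->
  quadr (e%:R : F) r%:R = (e * (r - e))%N%:R / (2 * r%:R).
Proof. by move=> ler; rewrite /quadr natrM natrB. Qed.

Lemma Mbar_congr (j b r e : nat) : (0 < r)%N -> (e <= r)%N ->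
  (j * b = e %[mod r])%N -> Mbar j b r = quadr e%:R r%:R.
Proof.
by move=> r_gt0 ler jbe; rewrite Mbar_mod_prod // /resid (mod_prod_congr ler jbe) quadr_nat.
Qed.

Lemma Mbar_congrN (j b r e : nat) : (0 < r)%N -> (e <= r)%N ->
  (j * b + e = 0 %[mod r])%N -> Mbar j b r = quadr e%:R r%:R.
Proof.
by move=> r_gt0 ler jbe; rewrite Mbar_mod_prod // /resid (mod_prod_congrN ler jbe) quadr_nat.
Qed.

Section Mediant.

Variables (b1 r1 b2 r2 x y : nat).
Hypothesis det : (b1 * r2 = b2 * r1 + 1)%N.

Lemma mul_mod_left : ((x * r1 + y * r2) * b1 = y %[mod r1])%N.
Proof.
by rewrite (_ : (x * r1 + y * r2) * b1 = (x * b1 + y * b2) * r1 + y)%N ?modnMDl //; nia.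
Qed.

Lemma mul_mod_right : ((x * r1 + y * r2) * b2 + x = 0 %[mod r2])%N.
Proof.
rewrite (_ : (x * r1 + y * r2) * b2 + x = (x * b1 + y * b2) * r2)%N ?modnMl ?mod0n //.
nia.
Qed.

Lemma mul_mod_mediant : (x <= y)%N ->
  ((x * r1 + y * r2) * (b1 + b2) = y - x %[mod r1 + r2])%N.
Proof.
move=> lexy; rewrite (_ : (x * r1 + y * r2) * (b1 + b2) =
  (x * b1 + y * b2) * (r1 + r2) + (y - x))%N ?modnMDl //.
nia.
Qed.

Lemma mul_mod_mediantN : (y <= x)%N ->
  ((x * r1 + y * r2) * (b1 + b2) + (x - y) = 0 %[mod r1 + r2])%N.
Proof.
move=> leyx; rewrite (_ : (x * r1 + y * r2) * (b1 + b2) + (x - y) =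
  (x * b1 + y * b2) * (r1 + r2))%N ?modnMl ?mod0n //.
nia.
Qed.

Lemma Mbar_mediant : (0 < r1)%N -> (0 < r2)%N -> (x <= r2)%N -> (y <= r1)%N ->
  Mbar (x * r1 + y * r2) (b1 + b2) (r1 + r2) + (Num.min x%:Z y%:Z)%:~R =
    quadr (y%:R - x%:R) (r1 + r2)%:R + x%:R.
Proof.
move=> r1_gt0 r2_gt0 lexr2 leyr1; have R_gt0 : (0 < r1 + r2)%N by rewrite addn_gt0 r1_gt0.
have [lexy | ltyx] := leqP x y.
- have le_yx_R : (y - x <= r1 + r2)%N by lia.
  rewrite min_l ?lez_nat // -pmulrn.
  by rewrite (Mbar_congr R_gt0 le_yx_R (mul_mod_mediant lexy)) natrB.
- have le_xy_R : (x - y <= r1 + r2)%N by lia.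
  rewrite min_r; last by rewrite lez_nat ltnW.
  rewrite -pmulrn (Mbar_congrN R_gt0 le_xy_R (mul_mod_mediantN (ltnW ltyx))).
  rewrite natrB; last exact: ltnW.
  rewrite -opprB quadrN; last by rewrite pnatr_eq0 -lt0n.
  by rewrite opprB -addrA subrK.
Qed.

End Mediant.

Theorem lemma2p3 (b1 r1 b2 r2 : nat) (x y : int) (n : nat) :
  (0 < b1)%N -> (0 < r1)%N -> (0 < b2)%N -> (0 < r2)%N ->
  (b1%:Z * r2%:Z - b2%:Z * r1%:Z = 1) ->
  0 < x -> x <= r2%:Z -> 0 < y -> y <= r1%:Z ->
  n%:Z = x * r1%:Z + y * r2%:Z ->
  Delta n (b1 + b2) (r1 + r2) =
    Delta n b1 r1 + Delta n b2 r2 - (Num.min x y)%:~R.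
Proof.
case: x => [x|//]; case: y => [y|//] _ r1_gt0 _ r2_gt0 detZ _ lexr2 _ leyr1 n_eq.
have det : (b1 * r2 = b2 * r1 + 1)%N by lia.
have -> : n = (x * r1 + y * r2)%N by lia.
have det_rat : b1%:R * r2%:R - b2%:R * r1%:R = 1 :> rat.
  by rewrite -!natrM det natrD addrAC subrr add0r.
have r1_neq0 : r1%:R != 0 :> rat by rewrite pnatr_eq0 -lt0n.
have r2_neq0 : r2%:R != 0 :> rat by rewrite pnatr_eq0 -lt0n.
have R_neq0 : r1%:R + r2%:R != 0 :> rat by rewrite -natrD pnatr_eq0 -lt0n addn_gt0 r1_gt0.
have := Mbar_mediant det r1_gt0 r2_gt0 lexr2 leyr1; move/(canRL (addrK _)).
rewrite /Delta !Mj_quadr => ->.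
rewrite (Mbar_congr r1_gt0 leyr1 (mul_mod_left x y det)).
rewrite (Mbar_congrN r2_gt0 lexr2 (mul_mod_right x y det)).
rewrite !natrD !natrM addrAC (quadr_mediant x%:R y%:R r1_neq0 r2_neq0 R_neq0 det_rat).
by rewrite !addrA.
Qed.
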